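(* Let $m,n,k,a$ be natural numbers with $n\geq 1$, $k\geq 1$, $m\geq 1$ and $1\leq a\leq 9$. Then the equation $$C_nC_{n+1}\cdots C_{n+k} = a\left(\frac{10^m-1}{9}\right)$$ has no solution. That is, no product of two or more consecutive Lucas-balancing numbers (starting from index at least $1$) is a decimal repdigit.
   Context: The Lucas-balancing sequence $(C_n)_{n\geq 0}$ is defined by $C_0=1$, $C_1=3$ and $C_{n+1}=6C_n-C_{n-1}$ for $n\geq 1$. For $1\le a\le 9$ and $m\ge 1$, the number $a\frac{10^m-1}{9}$ is the decimal integer consisting of $m$ copies of the digit $a$. *)

From mathcomp Require Import all_boot.
Set Implicit Arguments. Unset Strict Implicit. Unset Printing Implicit Defensive.

(* Lucas-balancing pair: (C_n, C_{n+1}), with C_0 = 1, C_1 = 3,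
   C_{n+1} = 6 C_n - C_{n-1}. The sequence is increasing, so the truncated
   subtraction on nat is exact. *)
Fixpoint lbpair (n : nat) : nat * nat :=
  match n with
  | 0 => (1, 3)
  | n'.+1 => let p := lbpair n' in (p.2, 6 * p.2 - p.1)
  end.

Definition lucas_bal (n : nat) : nat := (lbpair n).1.

Definition repdigit (a m : nat) : nat := a * ((10 ^ m - 1) %/ 9).

From mathcomp Require Import all_boot.
From mathcomp Require Import zify.

Set Implicit Arguments.
Unset Strict Implicit.
Unset Printing Implicit Defensive.

(* Modulo 280 = 8 * 5 * 7 the Lucas-balancing numbers are periodic of period 6
   with residues 1, 3, 17, 99, so every product of them is 1 or 3 modulo 8 and
   prime to 35. A repdigit with at least three digits is 7a modulo 8, which is
   1 or 3 only for a = 7 or a = 5, and then it is not prime to 35. Repdigits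
   with at most two digits are below 100, whereas a product of at least two
   consecutive terms from index 1 on is either C_1 C_2 = 51 or exceeds 99. *)

Lemma leq_lucas_bal_S n : 3 * lucas_bal n <= lucas_bal n.+1.
Proof.
rewrite /lucas_bal /=; elim: n => [|n] //=.
by case: (lbpair n) => x y /=; lia.
Qed.

Lemma lucas_balSS n : lucas_bal n.+2 + lucas_bal n = 6 * lucas_bal n.+1.
Proof.
have := leq_lucas_bal_S n; rewrite /lucas_bal /=.
by case: (lbpair n) => x y /=; lia.
Qed.

Lemma expn3_le_lucas_bal n : 3 ^ n <= lucas_bal n.
Proof.
elim: n => [|n IHn] //; rewrite expnS.
exact: leq_trans (leq_mul (leqnn 3) IHn) (leq_lucas_bal_S n).
Qed.

Lemma lucas_bal_gt0 n : 0 < lucas_bal n.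
Proof. exact: leq_trans (expn_gt0 3 n) (expn3_le_lucas_bal n). Qed.

Section Periodicity.

Variables d p : nat.
(* 1 and 3 are C_0 and C_1: the pair (C_p, C_(p+1)) returns to its start. *)
Hypothesis lucas_bal_p : lucas_bal p = 1 %[mod d].
Hypothesis lucas_bal_pS : lucas_bal p.+1 = 3 %[mod d].

Lemma lucas_bal_addl_mod n : lucas_bal (p + n) = lucas_bal n %[mod d].
Proof.
suff [] : lucas_bal (p + n) = lucas_bal n %[mod d] /\
          lucas_bal (p + n.+1) = lucas_bal n.+1 %[mod d] by [].
elim: n => [|n [IHn IHnS]]; first by rewrite addn0 addn1.
split=> //; rewrite !addnS in IHnS *; apply/eqP.
have : lucas_bal (p + n).+2 + lucas_bal (p + n) == lucas_bal n.+2 + lucas_bal n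
         %[mod d] by rewrite !lucas_balSS -modnMmr IHnS modnMmr.
by rewrite -[in X in _ == X]modnDmr -IHn modnDmr eqn_modDr.
Qed.

Lemma lucas_bal_mod_period n : lucas_bal n = lucas_bal (n %% p) %[mod d].
Proof.
rewrite {1}(divn_eq n p); elim: (n %/ p) => [|q IHq]; first by rewrite add0n.
by rewrite mulSn -addnA lucas_bal_addl_mod.
Qed.

End Periodicity.

Lemma lucas_bal_mod280 n : lucas_bal n %% 280 \in [:: 1; 3; 17; 99].
Proof.
rewrite (@lucas_bal_mod_period 280 6) //.
have : n %% 6 < 6 by rewrite ltn_pmod.
by case: (n %% 6) => [|[|[|[|[|[|]]]]]].
Qed.

Definition lb_residue (x : nat) : bool := (x %% 8 \in [:: 1; 3]) && coprime x 35.

Lemma lb_residueM x y : lb_residue x -> lb_residue y -> lb_residue (x * y).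
Proof.
case/andP=> x8 x35 /andP[y8 y35]; rewrite /lb_residue coprimeMl x35 y35 andbT.
by rewrite -modnMm; move: x8 y8; rewrite !inE => /orP[]/eqP-> /orP[]/eqP->.
Qed.

Lemma lb_residue_lucas_bal n : lb_residue (lucas_bal n).
Proof.
rewrite /lb_residue -coprime_modl.
rewrite -(modn_dvdm _ (_ : 8 %| 280)) // -(modn_dvdm _ (_ : 35 %| 280)) //.
by move: (lucas_bal_mod280 n); rewrite !inE => /or4P[]/eqP->.
Qed.

Lemma lb_residue_prod (r : seq nat) : lb_residue (\prod_(i <- r) lucas_bal i).
Proof.
apply: (big_ind lb_residue) => //; first exact: lb_residueM.
by move=> i _; apply: lb_residue_lucas_bal.
Qed.

Lemma lucas_bal_prod_51_or_gt99 n k : 1 <= n -> 1 <= k ->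
  \prod_(n <= i < n + k + 1) lucas_bal i = 51 \/
  99 < \prod_(n <= i < n + k + 1) lucas_bal i.
Proof.
case: k => [//|k] n_gt0 _; have n_le_nk := leq_addr k n.
rewrite addn1 addnS !big_nat_recr ?(leqW n_le_nk) //=.
have [nk_le1 | nk_ge2] := leqP (n + k) 1.
  have [-> ->] : n = 1 /\ k = 0 by lia.
  by left; rewrite big_geq.
right; set prefix := \prod_(n <= i < n + k) lucas_bal i.
have prefix_gt0 : 0 < prefix by apply: prodn_gt0 => i; apply: lucas_bal_gt0.
have C_ge9 : 9 <= lucas_bal (n + k).
  exact: leq_trans (leq_pexp2l _ nk_ge2) (expn3_le_lucas_bal _).
have C_ge27 : 27 <= lucas_bal (n + k).+1.
  exact: leq_trans (leq_mul (leqnn 3) C_ge9) (leq_lucas_bal_S _).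
nia.
Qed.

Fixpoint repunit (m : nat) : nat := if m is m'.+1 then 10 * repunit m' + 1 else 0.

Lemma repunit9 m : 9 * repunit m = 10 ^ m - 1.
Proof.
elim: m => [|m IHm] //=; rewrite expnS.
by have := expn_gt0 10 m; lia.
Qed.

Lemma repdigitE a m : repdigit a m = a * repunit m.
Proof. by rewrite /repdigit -repunit9 mulKn. Qed.

Lemma repunit_mod8 m : 3 <= m -> repunit m %% 8 = 7.
Proof. by case: m => [|[|[|m]]] //= _; lia. Qed.

Lemma repdigit_not_lb_residue a m : a <= 9 -> 3 <= m -> ~~ lb_residue (repdigit a m).
Proof.
move=> a_le9 m_ge3; rewrite repdigitE /lb_residue coprimeMl -modnMmr repunit_mod8 //.
by case: a a_le9 => [|[|[|[|[|[|[|[|[|[|a]]]]]]]]]].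
Qed.

Lemma repdigit_short a m : a <= 9 -> m <= 2 -> repdigit a m <= 99 /\ repdigit a m <> 51.
Proof. by rewrite repdigitE; case: m => [|[|[|m]]] //= a_le9 _; lia. Qed.

Theorem theorem4 (m n k a : nat) :
  1 <= n -> 1 <= k -> 1 <= m -> 1 <= a <= 9 ->
  \prod_(n <= i < n + k + 1) lucas_bal i <> repdigit a m.
Proof.
move=> n_gt0 k_gt0 _ /andP[_ a_le9] prodE.
have [m_le2 | m_ge3] := leqP m 2.
- have [rep_le99 rep_ne51] := repdigit_short a_le9 m_le2.
  by case: (lucas_bal_prod_51_or_gt99 n_gt0 k_gt0); rewrite prodE; lia.
- have := lb_residue_prod (index_iota n (n + k + 1)).
  by rewrite prodE (negbTE (repdigit_not_lb_residue a_le9 m_ge3)).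
Qed.
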